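(* Let $\mathbf H\in\mathbb R^{N\times L}$ and $\mathbf G=[\mathbf g_1,\dots,\mathbf g_M]\in\mathbb R^{N\times M}$ with $\operatorname{rank}([\mathbf H\ \mathbf G])=L+M$. Perform the recursive differencing procedure described in the context, with arbitrary admissible choices of reference indices $j_1,\dots,j_M$ (assuming that at every step $k$ the vector $\mathbf g_k^{(k-1)}$ has at least two nonzero entries), and let $\boldsymbol\Gamma=\boldsymbol\Gamma^{(M)}\cdots\boldsymbol\Gamma^{(1)}$. Then $\boldsymbol\Gamma\in\mathbb R^{(N-M)\times N}$ has full row rank, $\boldsymbol\Gamma\mathbf G=\mathbf 0$, and with $\mathbf P=(\boldsymbol\Gamma\boldsymbol\Gamma^T)^{-1/2}\boldsymbol\Gamma$ the differential estimate $$\hat{\mathbf x}_d=(\mathbf H^T\mathbf P^T\mathbf P\mathbf H)^{-1}\mathbf H^T\mathbf P^T\mathbf P\mathbf y$$ is well defined and equals $\hat{\mathbf x}_{\mathrm{jls}}=(\mathbf H^T\mathbf P_{\mathbf G}^\perp\mathbf H)^{-1}\mathbf H^T\mathbf P_{\mathbf G}^\perp\mathbf y$ for every $\mathbf y\in\mathbb R^N$. In particular $\hat{\mathbf x}_d$ does not depend on the choice of the reference indices $j_1,\dots,j_M$.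
   Context: Recursive differencing procedure: set $\mathbf g_i^{(0)}=\mathbf g_i$ for $i=1,\dots,M$. For $k=1,\dots,M$, let $\mathbf v=\mathbf g_k^{(k-1)}\in\mathbb R^{N-k+1}$, let $Z=\{i:v_i=0\}$ and $S=\{i:v_i\neq0\}$, and choose a reference index $j=j_k\in S$. Define $\boldsymbol\Gamma^{(k)}\in\mathbb R^{(N-k)\times(N-k+1)}$ as the matrix whose rows (listed in increasing order of $i$) are $\mathbf e_i^T$ for $i\in Z$ and $\mathbf e_i^T/v_i-\mathbf e_j^T/v_j$ for $i\in S\setminus\{j\}$, where $\mathbf e_i$ are standard basis vectors of $\mathbb R^{N-k+1}$; that is, the $k$-th step maps a vector $\mathbf d$ to the vector keeping the entries $d_i$, $i\in Z$, and replacing the others by $d_i/v_i-d_j/v_j$, $i\in S\setminus\{j\}$. Then set $\mathbf g_i^{(k)}=\boldsymbol\Gamma^{(k)}\mathbf g_i^{(k-1)}$ for all $i$. $\mathbf P_{\mathbf G}^\perp=\mathbf I_N-\mathbf G(\mathbf G^T\mathbf G)^{-1}\mathbf G^T$; $(\cdot)^{-1/2}$ is the inverse symmetric positive definite square root. *)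

From HB Require Import structures.
From mathcomp Require Import all_boot all_order all_algebra.
Set Implicit Arguments. Unset Strict Implicit. Unset Printing Implicit Defensive.
Import Order.TTheory GRing.Theory Num.Theory.
Local Open Scope ring_scope.

Section Defs.
Variable R : realFieldType.

(* The rows are indexed by r : 'I_n, row r corresponds to the index
   i = lift j r, i.e. the indices i <> j listed in increasing order. *)
Definition stepGamma (n : nat) (v : 'cV[R]_n.+1) (j : 'I_n.+1) : 'M[R]_(n, n.+1) :=
  \matrix_(r < n, c < n.+1)
    (if v (lift j r) 0 == 0 then (c == lift j r)%:R
     else (c == lift j r)%:R / v (lift j r) 0 - (c == j)%:R / v j 0).

(* The whole procedure, for N = M + n.  js k is the (0-based) reference
   index chosen at step k+1.  Returns Gamma = Gamma^(M) ... Gamma^(1). *)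
Fixpoint diffGamma (M n : nat) {struct M} :
    'M[R]_(M + n, M) -> (nat -> nat) -> 'M[R]_(n, M + n) :=
  match M as m return 'M[R]_(m + n, m) -> (nat -> nat) -> 'M[R]_(n, m + n) with
  | 0 => fun _ _ => 1%:M
  | M'.+1 => fun G js =>
      let v : 'cV[R]_(M' + n).+1 := @lsubmx R (M'.+1 + n) 1 M' G in
      let G1 := stepGamma v (inord (js 0%N)) in
      diffGamma (G1 *m @rsubmx R (M'.+1 + n) 1 M' G) (fun k => js k.+1) *m G1
  end.

Fixpoint admissible (M n : nat) {struct M} :
    'M[R]_(M + n, M) -> (nat -> nat) -> Prop :=
  match M as m return 'M[R]_(m + n, m) -> (nat -> nat) -> Prop with
  | 0 => fun _ _ => True
  | M'.+1 => fun G js =>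
      let v : 'cV[R]_(M' + n).+1 := @lsubmx R (M'.+1 + n) 1 M' G in
      let G1 := stepGamma v (inord (js 0%N)) in
      [/\ (js 0%N < (M' + n).+1)%N,
          v (inord (js 0%N)) 0 != 0,
          (1 < #|[set i | v i ord0 != 0%R]|)%N &
          admissible (G1 *m @rsubmx R (M'.+1 + n) 1 M' G) (fun k => js k.+1)]
  end.

Definition posdef (n : nat) (A : 'M[R]_n) : Prop :=
  A^T = A /\ forall x : 'cV[R]_n, x != 0 -> 0 < (x^T *m A *m x) 0 0.

Definition is_invsqrt (n : nat) (S A : 'M[R]_n) : Prop :=
  posdef S /\ S *m S = invmx A.

Definition PGperp (N M : nat) (G : 'M[R]_(N, M)) : 'M[R]_N :=
  1%:M - G *m invmx (G^T *m G) *m G^T.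

End Defs.

From HB Require Import structures.
From mathcomp Require Import all_boot all_order all_algebra.
Import Order.TTheory GRing.Theory Num.Theory.
Set Implicit Arguments. Unset Strict Implicit.
Local Open Scope ring_scope.

(* Each differencing step is row free and annihilates the column it is built
   from, so Gamma is row free with Gamma G = 0.  Since Gamma has N - M rows,
   the rows of Gamma and of G^T together span R^N, and the two orthogonal
   projectors Gamma^T (Gamma Gamma^T)^-1 Gamma and G (G^T G)^-1 G^T add up to
   the identity.  With P = (Gamma Gamma^T)^-1/2 Gamma this gives
   P^T P = P_G^perp, so both estimators are the same formula. *)

Section RowFree.
Variable R : realFieldType.

Lemma row_free_lkerP m p (A : 'M[R]_(m, p)) :
  reflect (forall u : 'rV_m, u *m A = 0 -> u = 0) (row_free A).
Proof.
apply: (iffP idP) => [fA u /eqP | /inj_row_free //].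
by rewrite mulmx_free_eq0 // => /eqP.
Qed.

Lemma row_free_mul m n p (A : 'M[R]_(m, n)) (B : 'M[R]_(n, p)) :
  row_free A -> row_free B -> row_free (A *m B).
Proof.
move=> /row_free_lkerP lkerA /row_free_lkerP lkerB.
by apply/row_free_lkerP => u; rewrite mulmxA => /lkerB /lkerA.
Qed.

Lemma row_mulmx_tr_eq0 p (w : 'rV[R]_p) : w *m w^T = 0 -> w = 0.
Proof.
move/(congr1 (fun A : 'M_1 => A 0 0)); rewrite !mxE => sum_sq0.
have sq_ge0 j : 0 <= w 0 j * w^T j 0 by rewrite mxE -expr2 sqr_ge0.
apply/rowP => i; apply/eqP; rewrite mxE -sqrf_eq0 expr2.
by have := @psumr_eq0P _ _ _ _ (fun j _ => sq_ge0 j) sum_sq0 i isT; rewrite mxE => ->.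
Qed.

Lemma row_free_mulmx_tr_unit m p (A : 'M[R]_(m, p)) :
  row_free A -> A *m A^T \in unitmx.
Proof.
move=> /row_free_lkerP lkerA; rewrite -row_free_unit.
apply/row_free_lkerP => u uAAt0; apply/lkerA/row_mulmx_tr_eq0.
by rewrite trmx_mul mulmxA -(mulmxA u) uAAt0 mul0mx.
Qed.

Lemma row_free_tr_gram_unit m p (A : 'M[R]_(m, p)) :
  row_free A^T -> A^T *m A \in unitmx.
Proof. by move=> /row_free_mulmx_tr_unit; rewrite trmxK. Qed.

Lemma row_free_col_mxd m1 m2 p (A : 'M[R]_(m1, p)) (B : 'M[R]_(m2, p)) :
  row_free (col_mx A B) -> row_free B.
Proof.
move=> /row_free_lkerP lkerAB; apply/row_free_lkerP => u uB0.
have /eqP : row_mx (0 : 'rV_m1) u = 0 by apply: lkerAB; rewrite mul_row_col mul0mx add0r.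
by rewrite row_mx_eq0 => /andP[_ /eqP].
Qed.

Lemma row_free_col_mx_orth m1 m2 p (A : 'M[R]_(m1, p)) (B : 'M[R]_(m2, p)) :
  row_free A -> row_free B -> A *m B^T = 0 -> row_free (col_mx A B).
Proof.
move=> /row_free_lkerP lkerA freeB ABt0.
apply/row_free_lkerP => u; rewrite -[u]hsubmxK mul_row_col => uAB0.
have u2_0 : rsubmx u = 0.
  apply/eqP; rewrite -(mulmx_free_eq0 _ (_ : row_free (B *m B^T))).
    move/(congr1 (mulmx^~ B^T)): uAB0.
    by rewrite /= mulmxDl -!mulmxA ABt0 mulmx0 add0r mul0mx => ->.
  by rewrite row_free_unit row_free_mulmx_tr_unit.
by move: uAB0; rewrite u2_0 mul0mx addr0 => /lkerA ->; rewrite row_mx0.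
Qed.

End RowFree.

Section Differencing.
Variable R : realFieldType.

Lemma stepGamma_row_free n (v : 'cV[R]_n.+1) j : row_free (stepGamma v j).
Proof.
apply/row_free_lkerP => u uGam0; apply/rowP => r.
have := congr1 (fun w : 'rV_n.+1 => w 0 (lift j r)) uGam0.
have lift_neq_j : (lift j r == j) = false by rewrite eq_sym (negbTE (neq_lift _ _)).
rewrite !mxE (bigD1 r) //= big1 => [|s sr]; last first.
  rewrite !mxE (inj_eq (@lift_inj _ j)) [r == s]eq_sym (negbTE sr) lift_neq_j.
  by case: ifP => _; rewrite ?mul0r ?subr0 ?mulr0.
rewrite !mxE eqxx lift_neq_j mul0r subr0 mul1r addr0.
case: ifP => [_|vr_neq0]; first by rewrite mulr1.
by move/eqP; rewrite mulf_eq0 invr_eq0 vr_neq0 orbF => /eqP.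
Qed.

Lemma stepGamma_mulmx_eq0 n (v : 'cV[R]_n.+1) j :
  v j 0 != 0 -> stepGamma v j *m v = 0.
Proof.
move=> vj_neq0; apply/colP => r; rewrite !mxE.
have lift_neq_j : (lift j r == j) = false by rewrite eq_sym (negbTE (neq_lift _ _)).
have [vr0|vr_neq0] := eqVneq (v (lift j r) 0) 0.
  rewrite (bigD1 (lift j r)) //= big1 => [|c cr]; last first.
    by rewrite !mxE vr0 eqxx (negbTE cr) mul0r.
  by rewrite !mxE vr0 eqxx mulr0 addr0.
rewrite (bigD1 (lift j r)) //= (bigD1 j) ?neq_lift //= big1 => [|c /andP[cr cj]].
  rewrite !mxE (negbTE vr_neq0) eqxx [j == lift j r]eq_sym lift_neq_j /= eqxx.
  rewrite !mul0r sub0r addr0.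
  by rewrite !div1r subr0 mulNr !mulVf // subrr.
by rewrite !mxE (negbTE vr_neq0) (negbTE cr) (negbTE cj) !mul0r subr0 mul0r.
Qed.

Lemma diffGamma_row_free_mulmx_eq0 M n (G : 'M[R]_(M + n, M)) js :
  admissible G js -> row_free (diffGamma G js) /\ diffGamma G js *m G = 0.
Proof.
elim: M G js => [|M IH] G js /=.
  by move=> _; rewrite /row_free mxrank1 mul1mx thinmx0.
move=> [_ vj_neq0 _ /IH[free_rec kill_rec]].
split; first exact/row_free_mul/stepGamma_row_free.
rewrite -[X in _ *m X](@hsubmxK _ _ 1 M G) (@mul_mx_row _ _ _ 1 M) -!mulmxA.
by rewrite stepGamma_mulmx_eq0 // mulmx0 kill_rec row_mx0.
Qed.

End Differencing.

Section Projectors.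
Variable R : realFieldType.

Lemma invsqrt_gram n p (S A : 'M[R]_n) (B : 'M[R]_(n, p)) :
  is_invsqrt S A -> (S *m B)^T *m (S *m B) = B^T *m invmx A *m B.
Proof. by move=> [[St _] SS]; rewrite trmx_mul St !mulmxA -(mulmxA _ S S) SS. Qed.

Lemma PGperp_mulmx_eq0 N M (G : 'M[R]_(N, M)) :
  G^T *m G \in unitmx -> PGperp G *m G = 0.
Proof.
by move=> uG; rewrite mulmxBl mul1mx -!mulmxA mulVmx // mulmx1 subrr.
Qed.

Lemma PGperp_gram N M (G : 'M[R]_(N, M)) :
  G^T *m G \in unitmx -> (PGperp G)^T *m PGperp G = PGperp G.
Proof.
move=> uG; have PG_sym : (PGperp G)^T = PGperp G.
  by rewrite /PGperp linearB /= trmx1 !trmx_mul trmxK trmx_inv trmx_mul trmxK mulmxA.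
have Gt_PG0 : G^T *m PGperp G = 0.
  by rewrite -{1}PG_sym -trmx_mul PGperp_mulmx_eq0 // trmx0.
by rewrite PG_sym {1}/PGperp mulmxBl mul1mx -(mulmxA _ G^T) Gt_PG0 mulmx0 subr0.
Qed.

Lemma PGperp_sandwich_unit N L M (H : 'M[R]_(N, L)) (G : 'M[R]_(N, M)) :
  row_free (col_mx H^T G^T) -> H^T *m PGperp G *m H \in unitmx.
Proof.
move=> freeHG; have /row_free_lkerP lkerHG := freeHG.
have uG : G^T *m G \in unitmx.
  exact/row_free_tr_gram_unit/(row_free_col_mxd freeHG).
rewrite -row_free_unit; apply/row_free_lkerP => u uK0; set w := u *m H^T.
have w_PG0 : w *m PGperp G = 0.
  have wPGt0 : w *m (PGperp G)^T = 0.
    apply: row_mulmx_tr_eq0; rewrite trmx_mul trmxK mulmxA -(mulmxA w) PGperp_gram //.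
    by move: uK0; rewrite trmx_mul trmxK !mulmxA => ->; rewrite mul0mx.
  by rewrite -PGperp_gram // mulmxA wPGt0 mul0mx.
have /eqP : row_mx u (- (w *m G *m invmx (G^T *m G))) = 0.
  apply: lkerHG; move: w_PG0; rewrite /PGperp mulmxBr mulmx1 !mulmxA => wPG0.
  by rewrite mul_row_col mulNmx -/w wPG0.
by rewrite row_mx_eq0 => /andP[/eqP].
Qed.

Lemma PGperp_complement n M (Gam : 'M[R]_(n, M + n)) (G : 'M[R]_(M + n, M)) :
  row_free Gam -> row_free G^T -> Gam *m G = 0 ->
  Gam^T *m invmx (Gam *m Gam^T) *m Gam = PGperp G.
Proof.
move=> freeGam freeGt GamG0; have uG := row_free_tr_gram_unit freeGt.
have uGam := row_free_mulmx_tr_unit freeGam.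
set X := col_mx Gam G^T.
have freeX : row_free X by apply: row_free_col_mx_orth; rewrite ?trmxK.
have fullX : row_full X by rewrite /row_full (eqP freeX) addnC.
set Q1 := Gam^T *m _ *m Gam; set Q2 := G *m invmx (G^T *m G) *m G^T.
have [D defD] : exists D, 1%:M - Q1 - Q2 = D *m X by apply/submxP/submx_full.
have Q_X0 : (1%:M - Q1 - Q2) *m X^T = 0.
  rewrite /X tr_col_mx trmxK mul_mx_row !mulmxBl !mul1mx.
  have -> : Q1 *m Gam^T = Gam^T by rewrite /Q1 -!mulmxA mulVmx // mulmx1.
  have -> : Q2 *m Gam^T = 0 by rewrite /Q2 -mulmxA -trmx_mul GamG0 trmx0 mulmx0.
  have -> : Q1 *m G = 0 by rewrite /Q1 -mulmxA GamG0 mulmx0.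
  have -> : Q2 *m G = G by rewrite /Q2 -!mulmxA mulVmx // mulmx1.
  by rewrite subrr !subr0 subrr row_mx0.
have D0 : D = 0.
  apply/eqP; rewrite -(mulmx_free_eq0 _ (_ : row_free (X *m X^T))).
    by rewrite mulmxA -defD Q_X0.
  by rewrite row_free_unit row_free_mulmx_tr_unit.
by apply/eqP; rewrite /PGperp -/Q2 eq_sym -subr_eq0 addrAC defD D0 mul0mx.
Qed.

End Projectors.

Theorem mainTheorem4 (R : realFieldType) (L M n : nat)
    (H : 'M[R]_(M + n, L)) (G : 'M[R]_(M + n, M)) (js : nat -> nat) :
  \rank (row_mx H G) = (L + M)%N ->
  admissible G js ->
  let Gam := diffGamma G js in
  [/\ row_free Gam,
      Gam *m G = 0 &
      forall S : 'M[R]_n, is_invsqrt S (Gam *m Gam^T) ->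
        let P := S *m Gam in
        [/\ H^T *m P^T *m P *m H \in unitmx,
            H^T *m PGperp G *m H \in unitmx &
            forall y : 'cV[R]_(M + n),
              invmx (H^T *m P^T *m P *m H) *m H^T *m P^T *m P *m y
              = invmx (H^T *m PGperp G *m H) *m H^T *m PGperp G *m y]].
Proof.
move=> rankHG adm Gam.
have [freeGam GamG0] := diffGamma_row_free_mulmx_eq0 adm.
have freeHG : row_free (col_mx H^T G^T).
  by rewrite /row_free -tr_row_mx mxrank_tr rankHG.
have freeGt := row_free_col_mxd freeHG.
split=> // S invsqrtS P.
have PtP : P^T *m P = PGperp G.
  by rewrite /P (invsqrt_gram _ invsqrtS) (PGperp_complement freeGam freeGt GamG0).
have P_sandwich p (A : 'M[R]_(p, M + n)) : A *m P^T *m P = A *m PGperp G.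
  by rewrite -mulmxA PtP.
by rewrite !P_sandwich; split=> //; apply: PGperp_sandwich_unit.
Qed.
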